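(* Let $n,m\ge 1$, let $A=(a_1,\ldots,a_m)$ be a real $n\times m$ matrix with $a_i\neq 0$ for all $i$, and let $b=(b_1,\ldots,b_m)^\top\in\mathbb{R}^m$ be such that $K=\{x\in\mathbb{R}^n \mid A^\top x\le b\}$ is nonempty. For $\varepsilon>0$ put $b_i(\varepsilon)=b_i+\varepsilon^i$ ($\varepsilon$ to the power $i$), $H_i(\varepsilon)=\{x\in\mathbb{R}^n\mid a_i^\top x\le b_i(\varepsilon)\}$, $\partial H_i(\varepsilon)=\{x\in\mathbb{R}^n\mid a_i^\top x= b_i(\varepsilon)\}$, $K(\varepsilon)=\bigcap_{i=1}^m H_i(\varepsilon)$, $F_i(\varepsilon)=\partial H_i(\varepsilon)\cap K(\varepsilon)$, and $\mathcal{F}(\varepsilon)=\{J\subseteq\{1,\ldots,m\}\mid J\neq\emptyset,\ \bigcap_{i\in J}F_i(\varepsilon)\neq\emptyset\}$. Then there exists $\delta>0$ such that for all $\varepsilon\in(0,\delta)$: (i) the family of hyperplanes $\{\partial H_i(\varepsilon)\mid i=1,\ldots,m\}$ is in general position; and (ii) $\mathcal{F}(\varepsilon)$ does not depend on $\varepsilon$; writing $\mathcal{F}(0+)$ for this common value, $\mathcal{F}(0+)$ is a simplicial complex.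
   Context: A finite set of $m$ hyperplanes $\{P_i\subset\mathbb{R}^n\mid i=1,\ldots,m\}$ is said to be in general position if there is no $J\subseteq\{1,\ldots,m\}$ such that $\bigcap_{i\in J}P_i$ contains an affine subspace of dimension $\max\{n+1-|J|,0\}$. A simplicial complex here means an abstract simplicial complex on the vertex set $\{1,\ldots,m\}$: a family of nonempty subsets closed under taking nonempty subsets. *)

From HB Require Import structures.
From mathcomp Require Import all_boot all_order all_algebra.
From mathcomp Require Export reals.
Set Implicit Arguments. Unset Strict Implicit. Unset Printing Implicit Defensive.
Import Order.TTheory GRing.Theory Num.Theory.
Local Open Scope ring_scope.

(* The i-th column of A : 'M_(n,m)
   is a_i, and  a_i^T x  is  (x *m col i A) 0 0. Indices i : 'I_m are
   0-based, so the paper's index i corresponds to the ordinal i-1. *)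

Section Defs.
Variable R : realFieldType.

Definition lin (n m : nat) (A : 'M[R]_(n, m)) (i : 'I_m) (x : 'rV[R]_n) : R :=
  (x *m col i A) 0 0.

Definition contains_affine (n : nat) (S : 'rV[R]_n -> Prop) (d : nat) : Prop :=
  exists (x0 : 'rV[R]_n) (V : 'M[R]_(d, n)),
    row_free V /\ forall c : 'rV[R]_d, S (x0 + c *m V).

Definition general_position (n m : nat) (P : 'I_m -> 'rV[R]_n -> Prop) : Prop :=
  ~ exists J : {set 'I_m},
      contains_affine (fun x => forall i, i \in J -> P i x) (maxn (n.+1 - #|J|) 0).

(* b_i(eps) = b_i + eps^i, with the paper's 1-based index i *)
Definition beps (m : nat) (b : 'cV[R]_m) (eps : R) (i : 'I_m) : R :=
  b i 0 + eps ^+ i.+1.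

Definition bdH (n m : nat) (A : 'M[R]_(n, m)) (b : 'cV[R]_m) (eps : R)
  (i : 'I_m) (x : 'rV[R]_n) : Prop := lin A i x = beps b eps i.

Definition Keps (n m : nat) (A : 'M[R]_(n, m)) (b : 'cV[R]_m) (eps : R)
  (x : 'rV[R]_n) : Prop := forall i, lin A i x <= beps b eps i.

Definition Feps (n m : nat) (A : 'M[R]_(n, m)) (b : 'cV[R]_m) (eps : R)
  (i : 'I_m) (x : 'rV[R]_n) : Prop := bdH A b eps i x /\ Keps A b eps x.

Definition in_face_family (n m : nat) (A : 'M[R]_(n, m)) (b : 'cV[R]_m)
  (eps : R) (J : {set 'I_m}) : Prop :=
  J != set0 /\ exists x : 'rV[R]_n, forall i, i \in J -> Feps A b eps i x.

End Defs.

Definition simplicial_complex (m : nat) (F : {set {set 'I_m}}) : Prop :=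
  forall J : {set 'I_m}, J \in F -> J != set0 /\
    forall J' : {set 'I_m}, J' \subset J -> J' != set0 -> J' \in F.

From HB Require Import structures.
From mathcomp Require Import all_boot all_order all_algebra.
From mathcomp Require Import reals boolp polyrcf.
From mathcomp Require Import ring lra zify.
Import Order.TTheory GRing.Theory Num.Theory.
Local Open Scope ring_scope.

(* Both parts rest on the fact that a property of eps defined by polynomial
   sign conditions has a constant truth value on some interval (0, delta):
   a nonzero polynomial has no root there.

   (ii) Fourier-Motzkin elimination turns feasibility of a system
   A^T x <= p(eps), whose right-hand sides are polynomials in eps, into a
   finite conjunction of sign conditions 0 <= q(eps).  So whether J belongs
   to F(eps) is eventually constant, and F(0+) consists of the J that belong
   to F(eps) for all small eps; it is closed under nonempty subsets because
   every F(eps) is.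

   (i) If the hyperplanes dH_i(eps), i in J, share an affine subspace of
   dimension n + 1 - |J|, the a_i with i in J are linearly dependent.  A fixed
   dependency sum_J y_i a_i = 0 then forces sum_J y_i b_i(eps) = 0, and since
   b_i(eps) = b_i + eps^i this is a nonzero polynomial in eps (its eps^i
   coefficient is y_i), so it can vanish only at finitely many eps. *)

Section NearZero.
Set Implicit Arguments.
Unset Strict Implicit.
Variable R : realFieldType.
Implicit Types P Q : R -> Prop.

Definition near0 P := exists2 d : R, 0 < d & forall e, 0 < e -> e < d -> P e.

Lemma near0_mono P Q : near0 P -> (forall e, P e -> Q e) -> near0 Q.
Proof. by move=> [d d0 Pd] PQ; exists d => // e e0 ed; apply/PQ/Pd. Qed.

Lemma near0_and P Q : near0 P -> near0 Q -> near0 (fun e => P e /\ Q e).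
Proof.
move=> [d d0 Pd] [d' d'0 Qd']; exists (Num.min d d'); first by rewrite lt_min d0.
by move=> e e0; rewrite lt_min => /andP[ed ed']; split; [apply: Pd | apply: Qd'].
Qed.

Lemma near0_witness P : near0 P -> exists e, P e.
Proof.
move=> [d d0 Pd]; exists (d / 2); apply: Pd; first by rewrite divr_gt0.
by rewrite ltr_pdivrMr // ltr_pMr // ltr1n.
Qed.

Lemma near0_all (T : finType) (P : T -> R -> Prop) :
  (forall t, near0 (P t)) -> near0 (fun e => forall t, P t e).
Proof.
move=> Pt; suff: near0 (fun e => forall t, t \in enum T -> P t e).
  by move/near0_mono; apply=> e Pe t; apply: Pe; rewrite mem_enum.
elim: (enum T) => [|t s IHs]; first by exists 1.
apply: (near0_mono (near0_and (Pt t) IHs)) => e [Pte Pse] u.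
by rewrite in_cons => /predU1P[->|/Pse].
Qed.

Definition settles P := exists Q : Prop, near0 (fun e => P e <-> Q).

Lemma settles_iff P Q : settles P -> (forall e, P e <-> Q e) -> settles Q.
Proof.
move=> [B PB] PQ; exists B; apply: (near0_mono PB) => e.
by rewrite -(propext (PQ e)).
Qed.

Lemma settles_const (B : Prop) : settles (fun _ => B).
Proof. by exists B; exists 1. Qed.

Lemma settles_and P Q : settles P -> settles Q -> settles (fun e => P e /\ Q e).
Proof.
move=> [B PB] [C QC]; exists (B /\ C); apply: (near0_mono (near0_and PB QC)).
by move=> e [-> ->].
Qed.

Lemma settles_all (T : Type) (p : T -> R -> bool) (s : seq T) :
  (forall t, settles (p t)) -> settles (fun e => all (p ^~ e) s).
Proof.
move=> pt; elim: s => [|t s IHs] /=; first by exists True; exists 1.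
by apply: (settles_iff (settles_and (pt t) IHs)) => e; split=> /andP.
Qed.

Lemma near0_settled P : settles P -> near0 (fun e => P e <-> near0 P).
Proof.
move=> [B PB]; have [HB|nB] := pselect B.
  have P0 : near0 P by apply: (near0_mono PB) => e [_ /(_ HB)].
  by apply: (near0_mono PB) => e PeB; split=> // _; apply/PeB.
apply: (near0_mono PB) => e PeB; split=> [/PeB // | P0]; case: nB.
by have [e' [Pe'B /Pe'B]] := near0_witness (near0_and PB P0).
Qed.

End NearZero.

Section PolySign.
Variable R : rcfType.

Lemma near0_sgr_poly (p : {poly R}) :
  near0 (fun e => Num.sg p.[e] = sgp_right p 0).
Proof.
have [->|p0] := eqVneq p 0.
  by exists 1 => // e _ _; rewrite horner0 sgr0 sgp_right0.
exists (next_root p 0 1); first exact: next_root_gt.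
by move=> e e0 ed; apply: (@sgr_neighpr _ 1); rewrite /neighpr in_itv /= e0.
Qed.

Lemma settles_poly_ge0 (p : {poly R}) : settles (fun e => 0 <= p.[e]).
Proof.
exists (0 <= sgp_right p 0); apply: (near0_mono (near0_sgr_poly p)) => e <-.
by rewrite sgr_ge0.
Qed.

Lemma near0_poly_neq0 (p : {poly R}) : p != 0 -> near0 (fun e => p.[e] != 0).
Proof.
move=> p0; apply: (near0_mono (near0_sgr_poly p)) => e spe.
by rewrite -sgr_eq0 spe sgp_right_eq0.
Qed.

End PolySign.

Section FourierMotzkin.
Set Implicit Arguments.
Unset Strict Implicit.
Variable R : realFieldType.

(* Fourier-Motzkin in one unknown [t], each pair [(a, r)] being the bound
   [t * a <= r]; the hypothesis is [r_v / a_v <= r_u / a_u] cross-multiplied. *)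
Lemma fourier_motzkin_1d (s : seq (R * R)) :
  {in s &, forall u v, 0 < u.1 -> v.1 < 0 -> 0 <= u.1 * v.2 - v.1 * u.2} ->
  exists t, {in s, forall u, u.1 != 0 -> t * u.1 <= u.2}.
Proof.
move=> comp.
pose hi := \big[Num.min/0]_(u <- s | 0 < u.1) (u.2 / u.1).
exists (\big[Num.max/hi]_(v <- s | v.1 < 0) (v.2 / v.1)) => u us u0.
case: (ltgtP u.1 0) u0 => // [un|up] _.
  by rewrite -ler_ndivrMr //; exact: le_bigmax_seq us un.
rewrite -ler_pdivlMr // big_seq_cond; apply: bigmax_le => [|v /andP[vs vn]].
  exact: ge_bigmin_seq.
rewrite -subr_ge0.
have -> : u.2 / u.1 - v.2 / v.1 = (u.1 * v.2 - v.1 * u.2) / (u.1 * - v.1).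
  by field; rewrite ltr0_neq0 // lt0r_neq0.
by rewrite divr_ge0 ?comp // mulr_ge0 // ?oppr_ge0 ltW.
Qed.

(* A constraint [(c, p)] on [x : 'rV_n] reads [x *m c <= p.[e]]. *)
Definition constraint n := ('cV[R]_n * {poly R})%type.

Definition margin n (e : R) (x : 'rV[R]_n) (k : constraint n) : R :=
  k.2.[e] - (x *m k.1) 0 0.

Definition feasible n (e : R) (s : seq (constraint n)) :=
  exists x : 'rV[R]_n, all (fun k => 0 <= margin e x k) s.

Section Elimination.
Variable n : nat.
Implicit Types (k p q : constraint (1 + n)) (s : seq (constraint (1 + n))).

Definition pivot k : R := usubmx k.1 0 0.

Definition restrict k : constraint n := (dsubmx k.1, k.2).

Definition combine p q : constraint n :=
  (pivot p *: dsubmx q.1 - pivot q *: dsubmx p.1,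
   pivot p *: q.2 - pivot q *: p.2).

Definition fourier_motzkin s : seq (constraint n) :=
  [seq restrict k | k <- s & pivot k == 0] ++
  [seq combine p q | p <- [seq k <- s | 0 < pivot k],
                     q <- [seq k <- s | pivot k < 0]].

Lemma margin_row_mx e (t : 'rV_1) (y : 'rV_n) k :
  margin e (row_mx t y) k = margin e y (restrict k) - t 0 0 * pivot k.
Proof.
rewrite /margin /pivot -{1}(vsubmxK k.1) mul_row_col mxE [(t *m _) 0 0]mxE.
by rewrite big_ord1; ring.
Qed.

Lemma margin_combine e (y : 'rV_n) p q :
  margin e y (combine p q) =
  pivot p * margin e y (restrict q) - pivot q * margin e y (restrict p).
Proof.
by rewrite /margin /= mulmxBr -!scalemxAr !mxE hornerD hornerN !hornerZ; ring.
Qed.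

Lemma feasible_fourier_motzkin e s :
  feasible e s -> feasible e (fourier_motzkin s).
Proof.
move=> [x /allP xs]; exists (rsubmx x); apply/allP => k'.
have mx k :
    margin e x k = margin e (rsubmx x) (restrict k) - lsubmx x 0 0 * pivot k.
  by rewrite -margin_row_mx hsubmxK.
rewrite mem_cat => /orP[/mapP[k] | /allpairsP[[p q] [/= ]]].
  rewrite mem_filter => /andP[/eqP k0 ks] ->.
  by have := xs k ks; rewrite mx k0 mulr0 subr0.
rewrite !mem_filter => /andP[p0 ps] /andP[q0 qs] ->.
rewrite margin_combine.
have := xs p ps; have := xs q qs; rewrite !mx !subr_ge0 => Hq Hp.
nra.
Qed.

Lemma fourier_motzkin_feasible e s :
  feasible e (fourier_motzkin s) -> feasible e s.
Proof.
move=> [y /allP ys].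
pose u k := (pivot k, margin e y (restrict k)).
have [t Ht] : exists t, {in map u s, forall v, v.1 != 0 -> t * v.1 <= v.2}.
  apply: fourier_motzkin_1d => _ _ /mapP[p ps ->] /mapP[q qs ->] /= p0 q0.
  rewrite -margin_combine; apply: ys; rewrite mem_cat; apply/orP; right.
  by apply/allpairsP; exists (p, q); rewrite !mem_filter p0 q0 ps qs.
exists (row_mx (const_mx t) y); apply/allP => k ks.
rewrite margin_row_mx mxE subr_ge0.
have [k0|k0] := eqVneq (pivot k) 0; last exact: Ht (map_f u ks) k0.
rewrite k0 mulr0; apply: ys; rewrite mem_cat; apply/orP; left.
by apply: map_f; rewrite mem_filter k0 eqxx.
Qed.

Lemma feasible_fourier_motzkinE e s :
  feasible e (fourier_motzkin s) <-> feasible e s.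
Proof.
by split; [apply: fourier_motzkin_feasible | apply: feasible_fourier_motzkin].
Qed.

End Elimination.
End FourierMotzkin.

Section FeasibilitySettles.
Set Implicit Arguments.
Unset Strict Implicit.
Variable R : rcfType.

Lemma settles_feasible n (s : seq (constraint R n)) :
  settles (fun e => feasible e s).
Proof.
elim: n s => [|n IHn] s; last first.
  apply: (settles_iff (IHn (fourier_motzkin s))) => e.
  exact: feasible_fourier_motzkinE.
have margin0 e (x : 'rV[R]_0) (k : constraint R 0) : margin e x k = k.2.[e].
  by rewrite /margin mxE big_ord0 subr0.
apply: (settles_iff (settles_all s (fun k => settles_poly_ge0 k.2))) => e.
split=> [sk | [x]]; [exists 0 | ]; by under eq_all do rewrite margin0.
Qed.

End FeasibilitySettles.

Section RankDefect.
Variable F : fieldType.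

Lemma row_free_mulmx_eq0_rank d n k (V : 'M[F]_(d, n)) (M : 'M_(n, k)) :
  row_free V -> V *m M = 0 -> (d + \rank M <= n)%N.
Proof.
move=> /eqP rkV /sub_kermxP/mxrankS; rewrite mxrank_ker rkV.
by have := rank_leq_row M; lia.
Qed.

Lemma rank_lt_col_dependent n k (M : 'M[F]_(n, k)) :
  (\rank M < k)%N -> exists2 w : 'cV_k, w != 0 & M *m w = 0.
Proof.
move=> rkM; have : kermx M^T != 0.
  by rewrite -mxrank_eq0 mxrank_ker mxrank_tr -lt0n subn_gt0.
case/rowV0Pn => v /sub_kermxP vM v0; exists v^T.
  by apply: contraNneq v0 => /(congr1 trmx); rewrite trmxK trmx0 => ->.
by rewrite -[M]trmxK -trmx_mul vM trmx0.
Qed.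

End RankDefect.

Section Perturbation.
Variable R : rcfType.
Variables (n m : nat) (A : 'M[R]_(n, m)) (b : 'cV[R]_m).
Implicit Types J : {set 'I_m}.

Lemma linD i x y : lin A i (x + y) = lin A i x + lin A i y.
Proof. by rewrite /lin mulmxDl mxE. Qed.

Definition cols (J : {set 'I_m}) : 'M[R]_(n, #|J|) :=
  colsub (fun k : 'I_#|J| => enum_val k) A.

Lemma mulmx_colsE J (x : 'rV_n) k : (x *m cols J) 0 k = lin A (enum_val k) x.
Proof. by rewrite /lin !mxE; apply: eq_bigr => j _; rewrite !mxE. Qed.

Lemma affine_hyperplanes_rank J (beta : 'I_m -> R) d :
  contains_affine (fun x => forall i, i \in J -> lin A i x = beta i) d ->
  (d + \rank (cols J) <= n)%N.
Proof.
move=> [x0 [V [rfV HV]]]; apply: row_free_mulmx_eq0_rank rfV _.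
apply/matrixP => r k; rewrite [RHS]mxE.
have -> : (V *m cols J) r k = (row r V *m cols J) 0 k.
  by rewrite -row_mul [RHS]mxE.
rewrite mulmx_colsE.
have Jk := enum_valP k; have x0J := HV 0 _ Jk; rewrite mul0mx addr0 in x0J.
apply: (addrI (beta (enum_val k))); rewrite addr0 -{1}x0J -linD rowE.
exact: HV.
Qed.

Definition bpoly i : {poly R} := (b i 0)%:P + 'X^(i.+1).

Lemma horner_bpoly e i : (bpoly i).[e] = beps b e i.
Proof. by rewrite hornerD hornerC hornerXn. Qed.

Definition dependency_poly J (w : 'cV[R]_#|J|) : {poly R} :=
  \sum_k w k 0 *: bpoly (enum_val k).

Lemma dependency_poly_neq0 J (w : 'cV_#|J|) : w != 0 -> dependency_poly w != 0.
Proof.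
case/matrix0Pn => k0 [j0]; rewrite ord1 => wk0.
apply: contraNneq wk0 => /polyP/(_ (enum_val k0).+1).
rewrite coef0 coef_sum (bigD1 k0) //= big1 => [|k kk0].
  by rewrite coefZ coefD coefC coefXn eqxx /= add0r mulr1 addr0 => ->.
rewrite coefZ coefD coefC coefXn /= add0r eqSS.
by rewrite (inj_eq val_inj) (inj_eq enum_val_inj) eq_sym (negPf kk0) mulr0.
Qed.

Lemma dependency_poly_root J (w : 'cV_#|J|) e x :
  (forall i, i \in J -> lin A i x = beps b e i) -> cols J *m w = 0 ->
  (dependency_poly w).[e] = 0.
Proof.
move=> xJ Jw; rewrite horner_sum.
transitivity ((x *m cols J *m w) 0 0); last by rewrite -mulmxA Jw mulmx0 mxE.
rewrite mxE; apply: eq_bigr => k _.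
by rewrite hornerZ horner_bpoly -xJ ?enum_valP // mulmx_colsE mulrC.
Qed.

Lemma near0_general_position J :
  near0 (fun e => ~ contains_affine (fun x => forall i, i \in J -> bdH A b e i x)
                                    (maxn (n.+1 - #|J|) 0)).
Proof.
rewrite maxn0; have [rkJ|] := ltnP (\rank (cols J)) #|J|; last first.
  by move=> rkJ; exists 1 => // e _ _ /affine_hyperplanes_rank; lia.
have [w w0 Jw] := rank_lt_col_dependent rkJ.
apply: (near0_mono (near0_poly_neq0 (dependency_poly_neq0 w0))) => e we.
move=> [x [V [_ HV]]]; move: we.
rewrite (dependency_poly_root (x := x)) ?eqxx //.
by move=> i iJ; have := HV 0 i iJ; rewrite mul0mx addr0.
Qed.

Definition face_constraints J : seq (constraint R n) :=
  [seq (col i A, bpoly i) | i <- enum 'I_m] ++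
  [seq (- col i A, - bpoly i) | i <- enum J].

Lemma feasible_face_constraints e J x :
  all (fun k => 0 <= margin e x k) (face_constraints J) <->
  Keps A b e x /\ forall i, i \in J -> bdH A b e i x.
Proof.
have marginE i : margin e x (col i A, bpoly i) = beps b e i - lin A i x.
  by rewrite /margin horner_bpoly.
have marginNE i : margin e x (- col i A, - bpoly i) = lin A i x - beps b e i.
  by rewrite /margin /lin hornerN horner_bpoly mulmxN mxE opprK addrC.
rewrite all_cat !all_map; split=> [/andP[/allP K /allP E] | [K E]].
  have Ki i : lin A i x <= beps b e i.
    by have := K i; rewrite -enumT mem_enum /= marginE subr_ge0; apply.
  split=> // i iJ; apply/le_anti; rewrite Ki /=.
  by have := E i; rewrite mem_enum /= marginNE subr_ge0; apply.
apply/andP; split; apply/allP => i iJ /=; first by rewrite marginE subr_ge0 K.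
by rewrite mem_enum in iJ; rewrite marginNE (E i iJ) subrr.
Qed.

Lemma in_face_familyE e J :
  in_face_family A b e J <-> J != set0 /\ feasible e (face_constraints J).
Proof.
split=> -[J0 [x xJ]]; split=> //; exists x.
  have /set0Pn[i iJ] := J0; apply/feasible_face_constraints.
  by split=> [|j /xJ[]//]; case: (xJ i iJ).
by move/feasible_face_constraints: xJ => [K E] i /E.
Qed.

Lemma settles_in_face_family J : settles (fun e => in_face_family A b e J).
Proof.
have := settles_feasible (face_constraints J).
move/(settles_and (settles_const _ (J != set0)))/settles_iff; apply=> e.
by rewrite in_face_familyE.
Qed.

Lemma in_face_family_subset e J J' :
  J' \subset J -> J' != set0 ->
  in_face_family A b e J -> in_face_family A b e J'.
Proof.
by move=> /subsetP J'J J'0 [_ [x xJ]]; split=> //; exists x => i /J'J /xJ.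
Qed.

End Perturbation.

Theorem lemma1 (R : realType) (n m : nat) (A : 'M[R]_(n, m)) (b : 'cV[R]_m) :
  (0 < n)%N -> (0 < m)%N ->
  (forall i : 'I_m, col i A != 0) ->
  (exists x : 'rV[R]_n, forall i : 'I_m, lin A i x <= b i 0) ->
  exists delta : R, 0 < delta /\
    (forall eps : R, 0 < eps -> eps < delta ->
       general_position (fun i => bdH A b eps i)) /\
    exists F0 : {set {set 'I_m}},
      (forall eps : R, 0 < eps -> eps < delta ->
         forall J : {set 'I_m}, J \in F0 <-> in_face_family A b eps J) /\
      simplicial_complex F0.
Proof.
move=> _ _ _ _.
pose face J e := in_face_family A b e J.
pose F0 := [set J | `[< near0 (face J) >]].
have GP := near0_all (near0_general_position A b).
have FF : near0 (fun e => forall J, face J e <-> J \in F0).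
  apply: near0_all => J.
  apply: (near0_mono (near0_settled (settles_in_face_family A b J))) => e.
  by rewrite inE asboolE.
have [delta delta0 Hdelta] := near0_and GP FF.
exists delta; split=> //; split=> [e e0 ed [J]|]; first exact: (Hdelta e e0 ed).1.
exists F0; split=> [e e0 ed J|J]; first exact: iff_sym ((Hdelta e e0 ed).2 J).
rewrite inE => /asboolP FJ; split=> [|J' J'J J'0].
  by have [e []] := near0_witness FJ.
rewrite inE; apply/asboolP; apply: (near0_mono FJ) => e.
exact: in_face_family_subset.
Qed.
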